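(* Let $q=2^f$ with $f$ odd, and let $q_0<q$ be a power of $2$. Then there exist at least $2(q+1)/3$ elements $u\in\mathbb{F}_q$ such that the polynomial $X^{q_0+1}+uX^{q_0}+(u+1)X+1$ has no roots in $\mathbb{F}_q$. *)

From mathcomp Require Import all_boot all_order all_algebra all_field.
Set Implicit Arguments. Unset Strict Implicit. Unset Printing Implicit Defensive.
Import GRing.Theory.
Local Open Scope ring_scope.

Definition P5 (F : fieldType) (q0 : nat) (u : F) : {poly F} :=
  'X^(q0.+1) + u%:P * 'X^q0 + (u + 1)%:P * 'X + 1.

From mathcomp Require Import all_boot all_order all_algebra all_field.
From mathcomp Require Import ring zify.
Import GRing.Theory.

Set Implicit Arguments.
Unset Strict Implicit.

(* In characteristic 2 the Moebius map x |-> (x + 1)/x commutes with the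
   Frobenius power x |-> x^q0 and maps roots of P5 u to roots of P5 u.  It has
   order 3, and its only fixed points are the roots of x^2 + x + 1, which do not
   exist in F_q because q = 2^f = 2 (mod 3) for f odd.  Since 0 and 1 are never
   roots, a polynomial P5 u with a root has at least three of them, and every
   root x determines u = (x^(q0+1) + x + 1)/(x^q0 + x).  So at most q/3 values
   of u are bad, and at least q - (q - 2)/3 = 2(q + 1)/3 are good. *)

Local Open Scope ring_scope.

Definition mobius {F : fieldType} (x : F) : F := (x + 1) / x.

Definition P5_param {F : fieldType} (n : nat) (x : F) : F :=
  (x ^+ n.+1 + x + 1) / (x ^+ n + x).

Section Char2.

Variable F : fieldType.
Hypothesis pcharF2 : 2 \in [pchar F].

Lemma mobius_mobius (x : F) : x != 0 -> x + 1 != 0 ->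
  mobius (mobius x) = (x + 1)^-1.
Proof.
move=> x0 x1; rewrite /mobius.
have -> : (x + 1) / x + 1 = x^-1.
  by rewrite -{2}(divff x0) -mulrDl addrAC addrr_pchar2 // add0r mul1r.
by rewrite invf_div mulrA mulVf // mul1r.
Qed.

Lemma root_P5E n u (x : F) :
  root (P5 n u) x = (x ^+ n.+1 + u * x ^+ n + (u + 1) * x + 1 == 0).
Proof. by rewrite /root /P5 !hornerE. Qed.

Lemma root_P5_neq1 n u (x : F) : root (P5 n u) x -> x != 1.
Proof.
apply: contraTneq => ->; rewrite root_P5E !expr1n !mulr1.
have -> : (1 : F) + u + (u + 1) + 1 = 1 + (u + u) + (1 + 1) by ring.
by rewrite !addrr_pchar2 // !addr0 oner_eq0.
Qed.

Variable n : nat.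
Hypothesis n_pchar : [pchar F].-nat n.

Lemma root_P5_neq0 u (x : F) : root (P5 n u) x -> x != 0.
Proof.
have n_gt0 : (0 < n)%N by case/andP: n_pchar.
apply: contraTneq => ->; rewrite root_P5E !expr0n (gtn_eqF n_gt0).
by rewrite !mulr0 !add0r oner_eq0.
Qed.

Lemma root_P5_mobius u (x : F) : x != 0 -> root (P5 n u) x ->
  root (P5 n u) (mobius x).
Proof.
move=> x0; rewrite !root_P5E !exprS => /eqP Px.
set y := x ^+ n in Px *; have y0 : y != 0 by rewrite expf_neq0.
(* Frobenius: (mobius x)^n = mobius (x^n). *)
have -> : mobius x ^+ n = (y + 1) / y.
  by rewrite exprMn exprDn_pchar // expr1n exprVn.
set w := mobius x.
have clear_denominators :
    x * y * (w * ((y + 1) / y) + u * ((y + 1) / y) + (u + 1) * w + 1)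
  = (x * y + u * y + (u + 1) * x + 1) + ((u + 1) * x * y + y) *+ 2.
  by rewrite /w /mobius; field; apply/andP.
rewrite Px add0r -mulr_natl (pcharf0 pcharF2) mul0r in clear_denominators.
by move/eqP: clear_denominators; rewrite !mulf_eq0 (negbTE x0) (negbTE y0).
Qed.

Hypothesis no_cube_root : forall x : F, x ^+ 2 + x + 1 != 0.

Lemma mobius_neq (x : F) : x != 0 -> mobius x != x.
Proof.
move=> x0; apply: contra (no_cube_root x) => /eqP xx.
have -> : x ^+ 2 = x + 1 by rewrite -[x + 1](divfK x0) -/(mobius x) xx expr2.
have -> : x + 1 + x + 1 = (x + x) + (1 + 1) by ring.
by rewrite !addrr_pchar2 // addr0.
Qed.

Lemma mobius_mobius_neq (x : F) : x != 0 -> x + 1 != 0 ->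
  mobius (mobius x) != x.
Proof.
move=> x0 x1; rewrite mobius_mobius //; apply: contra (no_cube_root x).
move=> /eqP hx; have := mulfV x1; rewrite hx => x1x.
have -> : x ^+ 2 + x + 1 = (x + 1) * x + 1 by ring.
by rewrite x1x addrr_pchar2.
Qed.

Lemma mobius_orbit_uniq (x : F) : x != 0 -> x != 1 ->
  uniq [:: x; mobius x; mobius (mobius x)].
Proof.
move=> x0 x_neq1; have x1 : x + 1 != 0 by rewrite addr_eq0 oppr_pchar2.
have mx0 : mobius x != 0 by rewrite mulf_neq0 ?invr_eq0.
rewrite /= !inE !negb_or eq_sym mobius_neq // eq_sym mobius_mobius_neq //.
by rewrite eq_sym mobius_neq.
Qed.

Lemma root_P5_param u (x : F) : root (P5 n u) x -> P5_param n x = u.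
Proof.
rewrite /P5_param root_P5E !exprS => /eqP Px; set y := x ^+ n in Px *.
have yx : y + x != 0.
  apply: contra (no_cube_root x) => /eqP yx0.
  have y_eq : y = x by rewrite -[y]addr0 -yx0 addrA addrr_pchar2 // add0r.
  have -> : x ^+ 2 + x + 1
          = (x * x + u * x + (u + 1) * x + 1) - (u * x + u * x) by ring.
  by rewrite -{2 3}y_eq Px addrr_pchar2 // subrr.
have -> : x * y + x + 1 = u * (y + x).
  apply/eqP; rewrite -[u * _](oppr_pchar2 pcharF2) -addr_eq0 -Px.
  by apply/eqP; ring.
by rewrite mulfK.
Qed.

End Char2.

Lemma leq_mul_card_fibers (T U : finType) (g : T -> U) (B : {set U}) k :
  (forall u, u \in B -> k <= #|[set x | g x == u]|)%N -> (k * #|B| <= #|T|)%N.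
Proof.
move=> fiberB; rewrite -[#|T|]sum1_card (partition_big g xpredT) //=.
rewrite (bigID (mem B)) /= -[(k * _)%N]addn0 leq_add //.
rewrite -sum1_card big_distrr /= leq_sum // => u uB.
by rewrite muln1 sum1_card -cardsE fiberB.
Qed.

Section FiniteChar2.

Variable F : finFieldType.
Hypothesis pcharF2 : 2 \in [pchar F].
Hypothesis no_cube_root : forall x : F, x ^+ 2 + x + 1 != 0.
Variable n : nat.
Hypothesis n_pchar : [pchar F].-nat n.

Lemma root_P5_card_fiber u (x : F) : root (P5 n u) x ->
  (3 <= #|[set y | P5_param n y == u]|)%N.
Proof.
move=> hx; have x0 := root_P5_neq0 n_pchar hx.
have hmx := root_P5_mobius pcharF2 n_pchar x0 hx.
have hmmx := root_P5_mobius pcharF2 n_pchar (root_P5_neq0 n_pchar hmx) hmx.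
have orbit_uniq :=
  mobius_orbit_uniq pcharF2 no_cube_root x0 (root_P5_neq1 pcharF2 hx).
rewrite -[3%N](card_uniqP orbit_uniq); apply/subset_leq_card/subsetP => y.
rewrite !inE => /or3P [] /eqP ->; apply/eqP;
  exact: (root_P5_param pcharF2 no_cube_root).
Qed.

Lemma card_P5_with_root :
  (3 * #|~: [set u : F | [forall x, ~~ root (P5 n u) x]]| <= #|F|)%N.
Proof.
apply: (@leq_mul_card_fibers F F (P5_param n)) => u.
by rewrite !inE negb_forall => /existsP [x /negPn]; apply: root_P5_card_fiber.
Qed.

End FiniteChar2.

Lemma finField_no_cube_root (F : finFieldType) :
  2 \in [pchar F] -> #|F| = 2 %[mod 3] -> forall x : F, x ^+ 2 + x + 1 != 0.
Proof.
move=> pcharF2 q_mod3 x; apply/eqP => cube.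
have x3 : x ^+ 3 = 1.
  apply/eqP; rewrite -subr_eq0.
  have -> : x ^+ 3 - 1 = (x - 1) * (x ^+ 2 + x + 1) by ring.
  by rewrite cube mulr0.
have x2 : x ^+ 2 = x.
  rewrite -{2}(expf_card x) (divn_eq #|F| 3) q_mod3.
  by rewrite exprD mulnC exprM x3 expr1n mul1r.
by move: cube; rewrite x2 addrr_pchar2 // add0r => /eqP; rewrite oner_eq0.
Qed.

Local Close Scope ring_scope.

Lemma expn2_odd_mod3 f : odd f -> 2 ^ f = 2 %[mod 3].
Proof.
move=> hf; rewrite -(odd_double_half f) hf add1n expnS -mul2n expnM.
by rewrite -modnMmr -modnXm exp1n.
Qed.

Theorem lemma5p1 (F : finFieldType) (f e : nat)
  (hf : odd f) (hq : #|F| = 2 ^ f) (hq0 : 2 ^ e < 2 ^ f) :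
  2 * (2 ^ f + 1) <=
  3 * #|[set u : F | [forall x : F, ~~ root (P5 (2 ^ e) u) x]]|.
Proof.
have pcharF2 : 2 \in [pchar F]%R by apply: (card_finPcharP hq).
have q_mod3 : #|F| = 2 %[mod 3] by rewrite hq expn2_odd_mod3.
have e_pchar : [pchar F]%R.-nat (2 ^ e) by rewrite pnatX pnatE // pcharF2.
have no_cube_root := finField_no_cube_root pcharF2 q_mod3.
have := card_P5_with_root pcharF2 no_cube_root e_pchar.
set good := [set u | _ ].
have := cardsC good; rewrite hq in q_mod3 *; lia.
Qed.
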